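(* Let $G=(V,E)$ be a hypergraph and let $(X_1,\dots,X_p,W_0,Z_0)$ be a partition of $V$ for some integer $p\ge1$. Let $Q\subset V$ be a set such that \[Y_i:=X_i\setminus Q\neq\emptyset\ \ \forall i\in[p],\quad Y_{p+1}:=Q\cap Z_0\neq\emptyset,\quad Z:=Z_0\setminus Q\neq\emptyset,\quad W:=W_0\cup(Q\setminus Z_0)\neq\emptyset.\] Then $(Y_1,\dots,Y_p,Y_{p+1},W,Z)$ is a partition of $V$ and \[\sigma(Y_1,\dots,Y_{p+1},W,Z)\le\sigma(X_1,\dots,X_p,W_0,Z_0)+d(Q)-d(W_0\cap Q).\]
   Context: A hypergraph $G=(V,E)$ has finite vertex set $V$ and finite multiset $E$ of hyperedges (subsets of $V$). For $X\subseteq V$, $d(X)$ is the number of hyperedges meeting both $X$ and $V\setminus X$. For a partition $(Y_1,\dots,Y_m,W,Z)$ of $V$: $\mathrm{cost}(Y_1,\dots,Y_m,W,Z)$ is the number of hyperedges meeting at least two of its parts; $\mathrm{cost}(W,Z)$ is the number of hyperedges $e\subseteq W\cup Z$ meeting both $W$ and $Z$; $\alpha(Y_1,\dots,Y_m,W,Z)$ is the number of hyperedges meeting $Z$ and at least two of $Y_1,\dots,Y_m,W$; $\beta(Y_1,\dots,Y_m,Z)$ is the number of hyperedges disjoint from $Z$ meeting at least two of $Y_1,\dots,Y_m$; and $\sigma(Y_1,\dots,Y_m,W,Z):=\mathrm{cost}(Y_1,\dots,Y_m,W,Z)+\mathrm{cost}(W,Z)+\alpha(Y_1,\dots,Y_m,W,Z)+\beta(Y_1,\dots,Y_m,Z)$.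 *)

From mathcomp Require Import all_boot all_order all_algebra.
Set Implicit Arguments. Unset Strict Implicit. Unset Printing Implicit Defensive.

(* A hypergraph on a finite vertex type V: the vertex set is [set: V],
   the hyperedges form a multiset, represented as a list E : seq {set V}. *)

Section Hyper.
Variable V : finType.

Definition meets (e A : {set V}) : bool := e :&: A != set0.

Definition dcut (E : seq {set V}) (X : {set V}) : nat :=
  count (fun e : {set V} => meets e X && meets e (~: X)) E.

(* (P_i)_{i<k} together with the extra parts is a partition of V:
   parts pairwise disjoint and covering V (parts may a priori be empty). *)
Definition is_partition k (P : 'I_k -> {set V}) (W Z : {set V}) : Prop :=
  [/\ forall i j, i != j -> [disjoint P i & P j],
      forall i, [disjoint P i & W],
      forall i, [disjoint P i & Z],
      [disjoint W & Z] &
      (\bigcup_(i < k) P i) :|: W :|: Z = [set: V]].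

Definition nmeet m (e : {set V}) (Y : 'I_m -> {set V}) : nat :=
  #|[set i : 'I_m | meets e (Y i)]|.

Definition cost_all (E : seq {set V}) m (Y : 'I_m -> {set V}) (W Z : {set V}) :=
  count (fun e : {set V} => 2 <= nmeet e Y + meets e W + meets e Z) E.

Definition cost_WZ (E : seq {set V}) (W Z : {set V}) :=
  count (fun e : {set V} => [&& e \subset W :|: Z, meets e W & meets e Z]) E.

Definition alpha (E : seq {set V}) m (Y : 'I_m -> {set V}) (W Z : {set V}) :=
  count (fun e : {set V} => meets e Z && (2 <= nmeet e Y + meets e W)) E.

Definition beta (E : seq {set V}) m (Y : 'I_m -> {set V}) (Z : {set V}) :=
  count (fun e : {set V} => ~~ meets e Z && (2 <= nmeet e Y)) E.

Definition sigma (E : seq {set V}) m (Y : 'I_m -> {set V}) (W Z : {set V}) : nat :=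
  cost_all E Y W Z + cost_WZ E W Z + alpha E Y W Z + beta E Y Z.

End Hyper.

(* Y_i := X_i \ Q for i < p, Y_{p+1} := Q ∩ Z0 (index p, 0-based) *)
Definition newY (V : finType) p (X : 'I_p -> {set V}) (Q Z0 : {set V})
  (i : 'I_p.+1) : {set V} :=
  oapp (fun j : 'I_p => X j :\: Q) (Q :&: Z0) (insub (val i)).

From mathcomp Require Import all_boot all_order all_algebra.
From mathcomp Require Import zify.
Import Order.TTheory GRing.Theory Num.Theory.

Set Implicit Arguments.
Unset Strict Implicit.

(* Both sides of the inequality are sums over the hyperedges, so it suffices
   to compare the contribution of one hyperedge e.  That contribution only
   depends on how many of the X_i and of the X_i \ Q the edge meets, and on
   whether it meets W0 ∩ Q, W0 \ Q, Z0 ∩ Q, Z0 \ Q and Q \ (W0 ∪ Z0); once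
   the few relations between these quantities are established, comparing
   the two contributions is a finite check.  That the new parts form a
   partition is seen vertex by vertex: each vertex lies in exactly one part. *)

Definition sigma_term (ny : nat) (mW mZ inWZ : bool) : nat :=
  (2 <= ny + mW + mZ) + [&& inWZ, mW & mZ] + (mZ && (2 <= ny + mW))
  + (~~ mZ && (2 <= ny)).

(* [a], [b]: numbers of the X_i and of the X_i \ Q met by the edge;
   [c]: it meets Q \ (W0 ∪ Z0); [wq], [wn], [zq], [zn]: it meets
   W0 ∩ Q, W0 \ Q, Z0 ∩ Q, Z0 \ Q; [dWQ]: it is cut by W0 ∩ Q. *)
Lemma sigma_term_step (a b : nat) (c wq wn zq zn dWQ : bool) :
  b <= a -> (b < a -> c) -> (c -> 0 < a) ->
  (dWQ -> wq && [|| 0 < a, wn, zq | zn]) ->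
  sigma_term (b + zq) [|| wq, wn | c] zn (b + zq == 0) + dWQ
  <= sigma_term a (wq || wn) (zq || zn) (a == 0)
     + ([|| wq, c | zq] && [|| 0 < b, wn | zn]).
Proof.
rewrite /sigma_term.
by case: c; case: wq; case: wn; case: zq; case: zn; case: dWQ => /=; lia.
Qed.

Lemma count_sum (T : Type) (a : pred T) (s : seq T) :
  count a s = \sum_(x <- s) a x.
Proof. by elim: s => [|x s IHs]; rewrite ?big_nil ?big_cons //= IHs. Qed.

Lemma card_set_sum (T : finType) (a : pred T) :
  #|[set x | a x]| = \sum_x a x.
Proof.
by rewrite -sum1dep_card big_mkcond; apply: eq_bigr => x _; case: (a x).
Qed.

Section Hypergraph.
Variable V : finType.
Implicit Types (e A B W Z : {set V}) (E : seq {set V}).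

Lemma sigma_sum E k (Y : 'I_k -> {set V}) W Z :
  sigma E Y W Z = \sum_(e <- E)
    sigma_term (nmeet e Y) (meets e W) (meets e Z) (e \subset W :|: Z).
Proof.
by rewrite /sigma /cost_all /cost_WZ /alpha /beta !count_sum -!big_split.
Qed.

Lemma meetsP e A : reflect (exists2 v, v \in e & v \in A) (meets e A).
Proof.
apply: (iffP (set0Pn (e :&: A))) => [[v]|[v ve vA]].
  by rewrite inE => /andP[]; exists v.
by exists v; rewrite inE ve vA.
Qed.

Lemma meetsU e A B : meets e (A :|: B) = meets e A || meets e B.
Proof. by rewrite /meets setIUr setU_eq0 negb_and. Qed.

Lemma meetsS e A B : A \subset B -> meets e A -> meets e B.
Proof.
by move=> /subsetP sAB /meetsP[v ve /sAB vB]; apply/meetsP; exists v.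
Qed.

Lemma meets_split e A B : meets e A = meets e (A :&: B) || meets e (A :\: B).
Proof. by rewrite -meetsU setID. Qed.

Lemma meets_bigcup e k (P : 'I_k -> {set V}) :
  meets e (\bigcup_i P i) = (0 < nmeet e P).
Proof.
apply/meetsP/card_gt0P => [[v ve /bigcupP[i _ vi]]|[i]].
  by exists i; rewrite inE; apply/meetsP; exists v.
by rewrite inE => /meetsP[v ve vi]; exists v => //; apply/bigcupP; exists i.
Qed.

Lemma leq_nmeet e k (P P' : 'I_k -> {set V}) :
  (forall i, meets e (P i) -> meets e (P' i)) -> nmeet e P <= nmeet e P'.
Proof.
by move=> PP'; apply/subset_leq_card/subsetP => i; rewrite !inE; apply: PP'.
Qed.

Section Partition.
Context {k : nat} {P : 'I_k -> {set V}} {W Z : {set V}}.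

Lemma is_partitionP :
  is_partition P W Z <->
  (forall v, #|[set i | v \in P i]| + (v \in W) + (v \in Z) = 1).
Proof.
split=> [[dPP dPW dPZ dWZ cover] v|one].
  have : v \in [set: V] by [].
  rewrite -cover !inE => /orP[/orP[/bigcupP[i _ vi]|vW]|vZ].
  - have -> : [set j | v \in P j] = [set i].
      apply/setP => j; rewrite !inE; apply/idP/eqP => [vj|-> //].
      apply/eqP; apply: contraTT vj; rewrite eq_sym => ij.
      by rewrite (disjointFr (dPP i j ij) vi).
    by rewrite cards1 (disjointFr (dPW i) vi) (disjointFr (dPZ i) vi).
  - have -> : [set j | v \in P j] = set0.
      by apply/setP => j; rewrite !inE (disjointFl (dPW j) vW).
    by rewrite cards0 vW (disjointFr dWZ vW).
  - have -> : [set j | v \in P j] = set0.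
      by apply/setP => j; rewrite !inE (disjointFl (dPZ j) vZ).
    by rewrite cards0 vZ (disjointFl dWZ vZ).
have inP_gt0 i v : v \in P i -> 0 < #|[set j | v \in P j]|.
  by move=> vi; apply/card_gt0P; exists i; rewrite inE.
split.
- move=> i j ij; apply/pred0P => v /=; apply/negbTE/andP => -[vi vj].
  have : #|[set i; j]| <= #|[set l | v \in P l]|.
    by apply/subset_leq_card/subsetP => l; rewrite !inE => /orP[]/eqP->.
  by rewrite cards2 ij; have := one v; lia.
- move=> i; apply/pred0P => v /=; apply/negbTE/andP => -[/inP_gt0 vi vW].
  by have := one v; rewrite vW; lia.
- move=> i; apply/pred0P => v /=; apply/negbTE/andP => -[/inP_gt0 vi vZ].
  by have := one v; rewrite vZ; lia.
- apply/pred0P => v /=; apply/negbTE/andP => -[vW vZ].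
  by have := one v; rewrite vW vZ; lia.
- apply/setP => v; rewrite !inE.
  case: (v \in W) (v \in Z) (one v) => [] [] P1; rewrite ?orbT // !orbF.
  have /card_gt0P[i] : 0 < #|[set i | v \in P i]| by lia.
  by rewrite inE => vi; apply/bigcupP; exists i.
Qed.

Hypothesis partP : is_partition P W Z.

Lemma setC_partition A :
  ~: A = \bigcup_i (P i :\: A) :|: (W :\: A) :|: (Z :\: A).
Proof.
case: partP => _ _ _ _ cover; apply/setP => v; rewrite !inE -!orbA.
apply/idP/or3P => [vA|]; last first.
  by case=> [/bigcupP[i _ /setDP[]]|/andP[]|/andP[]].
have : v \in [set: V] by [].
rewrite -cover !inE => /orP[/orP[/bigcupP[i _ vi]|vW]|vZ].
- by apply: Or31; apply/bigcupP; exists i; rewrite // !inE vA.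
- by apply: Or32; rewrite vA.
- by apply: Or33; rewrite vA.
Qed.

Lemma meets_setC e A :
  meets e (~: A) =
  [|| 0 < nmeet e (fun i => P i :\: A), meets e (W :\: A) | meets e (Z :\: A)].
Proof. by rewrite setC_partition !meetsU meets_bigcup orbA. Qed.

Lemma subset_partition e : (e \subset W :|: Z) = (nmeet e P == 0).
Proof.
case: partP => _ dPW dPZ _ cover.
rewrite -[nmeet e P == 0]negbK -lt0n -meets_bigcup.
apply/subsetP/idP => [eWZ|noP v ve].
  apply/meetsP => -[v ve /bigcupP[i _ vi]].
  have := eWZ v ve.
  by rewrite inE (disjointFr (dPW i) vi) (disjointFr (dPZ i) vi).
have : v \in [set: V] by [].
rewrite -cover !inE -orbA => /orP[vP|//].
by case/meetsP: noP; exists v.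
Qed.

End Partition.

Section NewPartition.
Context {p : nat} {X : 'I_p -> {set V}} {W0 Z0 : {set V}} (Q : {set V}).

Local Notation newW := (W0 :|: (Q :\: Z0)).
Local Notation newZ := (Z0 :\: Q).

Lemma card_newY (a : pred {set V}) :
  #|[set i | a (newY X Q Z0 i)]| = #|[set j | a (X j :\: Q)]| + a (Q :&: Z0).
Proof.
rewrite !card_set_sum big_ord_recr /=; congr (_ + _).
  apply: eq_bigr => i _; rewrite /newY /=.
  case: insubP => [j _ ji|]; last by rewrite /= ltn_ord.
  by congr (a (X _ :\: Q) : nat); apply: val_inj.
by rewrite /newY insubF //= ltnn.
Qed.

Lemma nmeet_newY e :
  nmeet e (newY X Q Z0) = nmeet e (fun j => X j :\: Q) + meets e (Q :&: Z0).
Proof. exact: card_newY. Qed.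

Hypothesis partX : is_partition X W0 Z0.

Lemma newY_partition : is_partition (newY X Q Z0) newW newZ.
Proof.
apply/is_partitionP => v; rewrite (card_newY (fun A => v \in A)) /=.
have /is_partitionP/(_ v) := partX.
have -> : [set j | v \in X j :\: Q] = [set j | v \notin Q & v \in X j].
  by apply/setP => j; rewrite !inE.
rewrite !inE; case: (v \in Q) => /=; rewrite ?cards0 ?andbT ?andbF ?orbF.
  by case: (v \in W0); case: (v \in Z0) => /=; lia.
by lia.
Qed.

Lemma sigma_term_newY_le e :
  sigma_term (nmeet e (newY X Q Z0)) (meets e newW) (meets e newZ)
    (e \subset newW :|: newZ) + (meets e (W0 :&: Q) && meets e (~: (W0 :&: Q)))
  <= sigma_term (nmeet e X) (meets e W0) (meets e Z0) (e \subset W0 :|: Z0)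
    + (meets e Q && meets e (~: Q)).
Proof.
have [_ dXW dXZ _ cover] := partX.
have meets_newW : meets e newW = [|| meets e (W0 :&: Q), meets e (W0 :\: Q)
                                   | meets e (Q :\: (W0 :|: Z0))].
  rewrite -!meetsU; congr meets; apply/setP => v; rewrite !inE.
  by case: (v \in W0); case: (v \in Q); case: (v \in Z0).
have meetsQ : meets e Q = [|| meets e (W0 :&: Q), meets e (Q :\: (W0 :|: Z0))
                            | meets e (Q :&: Z0)].
  rewrite -!meetsU; congr meets; apply/setP => v; rewrite !inE.
  by case: (v \in W0); case: (v \in Q); case: (v \in Z0).
have XQ i : X i :&: Q \subset Q :\: (W0 :|: Z0).
  apply/subsetP => v; rewrite !inE => /andP[vi ->].
  by rewrite (disjointFr (dXW i) vi) (disjointFr (dXZ i) vi).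
have nmeetD A : nmeet e (fun i => X i :\: A) <= nmeet e X.
  by apply: leq_nmeet => i; apply/meetsS/subsetDl.
rewrite (subset_partition newY_partition) (subset_partition partX) nmeet_newY.
rewrite meets_newW meetsQ (meets_setC partX _ Q) (meets_split _ W0 Q).
rewrite (meets_split _ Z0 Q) [Z0 :&: Q]setIC.
apply: sigma_term_step; first exact: nmeetD.
- rewrite ltnNge; apply: contraNT => noc; apply: leq_nmeet => i.
  rewrite (meets_split _ (X i) Q) => /orP[/(meetsS (XQ i)) c|//].
  by rewrite c in noc.
- rewrite -meets_bigcup; apply: meetsS; apply/subsetP => v.
  rewrite !inE => /andP[/norP[vW vZ] _]; have : v \in [set: V] by [].
  by rewrite -cover !inE (negbTE vW) (negbTE vZ) !orbF.
- case/andP => -> /=; rewrite (meets_setC partX) => /or3P[nX|nW|nZ].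
  + by rewrite (leq_trans nX (nmeetD _)).
  + apply/or4P/Or42; apply: meetsS _ nW; apply/subsetP => v; rewrite !inE.
    by case: (v \in W0); case: (v \in Q).
  + have := meetsS (subsetDl _ _) nZ.
    rewrite (meets_split _ Z0 Q) [Z0 :&: Q]setIC.
    by case/orP => ->; rewrite !orbT.
Qed.

Lemma sigma_newY_le E :
  sigma E (newY X Q Z0) newW newZ + dcut E (W0 :&: Q)
  <= sigma E X W0 Z0 + dcut E Q.
Proof.
rewrite !sigma_sum /dcut !count_sum -!big_split.
by apply: leq_sum => e _; apply: sigma_term_newY_le.
Qed.

End NewPartition.

End Hypergraph.

Local Open Scope ring_scope.

Theorem lemma3p3 (V : finType) (E : seq {set V}) (p : nat)
  (X : 'I_p -> {set V}) (W0 Z0 Q : {set V}) :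
  (1 <= p)%N ->
  is_partition X W0 Z0 ->
  (forall i : 'I_p, X i :\: Q != set0) ->
  Q :&: Z0 != set0 ->
  Z0 :\: Q != set0 ->
  W0 :|: (Q :\: Z0) != set0 ->
  is_partition (newY X Q Z0) (W0 :|: (Q :\: Z0)) (Z0 :\: Q) /\
  ((sigma E (newY X Q Z0) (W0 :|: (Q :\: Z0)) (Z0 :\: Q))%:Z
     <= (sigma E X W0 Z0)%:Z + (dcut E Q)%:Z - (dcut E (W0 :&: Q))%:Z).
Proof.
move=> _ partX _ _ _ _; split; first exact: newY_partition.
have := sigma_newY_le Q partX E; lia.
Qed.
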